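(* Let $\mathscr{X},\mathscr{Y},\mathscr{Z}$ be real Banach spaces with duals $\mathscr{X}^*,\mathscr{Y}^*,\mathscr{Z}^*$, let $A:\mathscr{X}\to\mathscr{Y}$ and $B:\mathscr{X}\to\mathscr{Z}$ be bounded linear operators with adjoints $A^*,B^*$, let $\mathbf{y}_0\in\mathscr{Y}$ and $\rho>0$. Then $$\inf\{\|\mathbf{y}_0-A\mathbf{x}\|_{\mathscr{Y}}+\rho\|B\mathbf{x}\|_{\mathscr{Z}}:\mathbf{x}\in\mathscr{X}\}=\sup\{|\langle\mathbf{y}_0,\lambda\rangle_{\mathscr{Y}}|:\ \lambda\in\mathscr{Y}^*,\ \mu\in\mathscr{Z}^*,\ \max\{\|\lambda\|_{\mathscr{Y}^*},\|\mu\|_{\mathscr{Z}^*}\}\le1,\ A^*\lambda+\rho B^*\mu=0\}.$$ Moreover, if $p,p'\in(1,+\infty)$ with $1/p+1/p'=1$, then $$\inf\{(\|\mathbf{y}_0-A\mathbf{x}\|^p_{\mathscr{Y}}+\rho\|B\mathbf{x}\|^p_{\mathscr{Z}})^{1/p}:\mathbf{x}\in\mathscr{X}\}=\sup\{|\langle\mathbf{y}_0,\lambda\rangle_{\mathscr{Y}}|:\ \lambda\in\mathscr{Y}^*,\ \mu\in\mathscr{Z}^*,\ (\|\lambda\|^{p'}_{\mathscr{Y}^*}+\|\mu\|^{p'}_{\mathscr{Z}^*})^{1/p'}\le1,\ A^*\lambda+\rho^{1/p}B^*\mu=0\}.$$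
   Context: $\langle\mathbf{y},\lambda\rangle_{\mathscr{Y}}:=\lambda(\mathbf{y})$ for $\mathbf{y}\in\mathscr{Y}$, $\lambda\in\mathscr{Y}^*$. *)

From HB Require Import structures.
From mathcomp Require Import all_boot all_order all_algebra.
From mathcomp Require Import all_classical all_reals all_analysis.
Set Implicit Arguments. Unset Strict Implicit. Unset Printing Implicit Defensive.
Import Order.TTheory GRing.Theory Num.Theory.
Import numFieldNormedType.Exports.
Local Open Scope classical_set_scope.
Local Open Scope ring_scope.

Definition dual_norm (R : realType) (Y : normedModType R) (l : Y -> R) : R :=
  sup [set `|l y| | y in [set y : Y | `|y| <= 1]].

Definition is_dual (R : realType) (Y : normedModType R) (l : {linear Y -> R^o}) : Prop :=
  continuous l.

(* Weak duality: if [l \o A + k (m \o B) = 0] then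
   [l y0 = l (y0 - A x) - k m (B x)], so [|l y0|] is at most the pairing of
   [(||l||, ||m||)] with [(||y0 - A x||, k ||B x||)], hence at most the cost
   [N (||y0 - A x||, k ||B x||)] as soon as [(||l||, ||m||)] lies in the unit
   ball of the dual norm [D] of [N].
   Strong duality: the infimum of the cost is the distance from [(y0, 0)] to
   the subspace [{(A x, k B x)}] of [Y * Z] for the seminorm
   [q (y, z) = N (||y||, ||z||)]. Hahn-Banach, proved here from Zorn's lemma,
   gives a functional dominated by [q], vanishing on that subspace and equal to
   the distance at [(y0, 0)]; its restrictions [l] and [m] to [Y] and [Z]
   attain the supremum.
   The theorem is the case [N (a, b) = a + b], [D = max], [k = rho], and the
   case [N = l^p], [D = l^p'] (dual by Hoelder), [k = rho^(1/p)]. *)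

From HB Require Import structures.
From mathcomp Require Import all_boot all_order all_algebra.
From mathcomp Require Import all_classical all_reals all_analysis.
From mathcomp Require Import ring lra.
Import Order.TTheory GRing.Theory Num.Theory.
Import numFieldNormedType.Exports.
Local Open Scope classical_set_scope.
Local Open Scope ring_scope.
Set Implicit Arguments. Unset Strict Implicit.

Definition linear_of (R : pzRingType) (U V : lmodType R) (f : U -> V)
  (fL : linear f) : {linear U -> V} :=
  HB.pack f (GRing.isLinear.Build R U V *:%R f fL).

Section HahnBanach.
Variables (R : realType) (V : lmodType R) (q : V -> R).
Hypothesis qD : forall u v, q (u + v) <= q u + q v.
Hypothesis qZ : forall (t : R) v, q (t *: v) = `|t| * q v.

Lemma seminorm0 : q 0 = 0.
Proof. by rewrite -(scale0r (0 : V)) qZ normr0 mul0r. Qed.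

Lemma seminorm_ge0 v : 0 <= q v.
Proof.
have := qD v ((-1) *: v); rewrite qZ scaleN1r subrr seminorm0 normrN normr1.
by rewrite mul1r => h; lra.
Qed.

Lemma seminorm_dominated_norm (f : {linear V -> R^o}) :
  (forall v, f v <= q v) -> forall v, `|f v| <= q v.
Proof.
move=> fq v; rewrite ler_norml fq andbT lerNl -linearN.
by rewrite -[q v]mul1r -normrN1 -qZ scaleN1r fq.
Qed.

(* Partial linear functionals dominated by [q] are handled through their
   graphs, so that extending a functional is plain set inclusion. *)
Definition dominated_graph (G : set (V * R)) :=
  [/\ G (0, 0),
      (forall a b, G a -> G b -> G (a.1 + b.1, a.2 + b.2)),
      (forall (t : R) a, G a -> G (t *: a.1, t * a.2)) &
      (forall a, G a -> a.2 <= q a.1)].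

Lemma dominated_graph_functional G v r r' :
  dominated_graph G -> G (v, r) -> G (v, r') -> r = r'.
Proof.
move=> [_ GD GZ Gq] Gr Gr'.
have Gdiff : G (0, r - r').
  by have := GD _ _ Gr (GZ (-1) _ Gr'); rewrite /= scaleN1r subrr mulN1r.
have := Gq _ (GZ (-1) _ Gdiff); have := Gq _ Gdiff.
rewrite /= scaler0 seminorm0 subr_le0 mulN1r oppr_le0 subr_ge0.
by move=> *; apply/eqP; rewrite eq_le; apply/andP.
Qed.

Lemma dominated_graph_bigcup (F : set (set (V * R))) :
  (forall G, F G -> G !=set0 -> dominated_graph G) -> total_on F subset ->
  (exists2 G, F G & G !=set0) -> dominated_graph (\bigcup_(G in F) G).
Proof.
move=> Fdom Ftot [G0 FG0 G0n0].
have Fdom' G a : F G -> G a -> dominated_graph G.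
  by move=> FG Ga; apply: Fdom => //; exists a.
have [G0_0 _ _ _] := Fdom _ FG0 G0n0.
split; first by exists G0.
- move=> a b [Ga FGa aa] [Gb FGb bb].
  have [ab|ba] := Ftot _ _ FGa FGb.
  + have [_ GD _ _] := Fdom' _ _ FGb bb.
    by exists Gb => //; apply: GD => //; apply: ab.
  + have [_ GD _ _] := Fdom' _ _ FGa aa.
    by exists Ga => //; apply: GD => //; apply: ba.
- move=> t a [G FG Ga]; have [_ _ GZ _] := Fdom' _ _ FG Ga.
  by exists G => //; apply: GZ.
- by move=> a [G FG Ga]; have [_ _ _ Gq] := Fdom' _ _ FG Ga; exact: Gq.
Qed.

Lemma exists_maximal_dominated_graph G0 : dominated_graph G0 ->
  exists G, [/\ dominated_graph G, G0 `<=` G &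
    forall G', dominated_graph G' -> G `<=` G' -> G' `<=` G].
Proof.
move=> G0dom.
(* The empty set is admitted so that the empty chain has an upper bound. *)
pose P G := G = set0 \/ dominated_graph G /\ G0 `<=` G.
have [G [PG Gmax]] : exists G, P G /\ forall G', G `<` G' -> ~ P G'.
  apply: Zorn_bigcup => F FP Ftot.
  have [[G FG Gn0]|Fempty] := pselect (exists2 G, F G & G !=set0); last first.
    left; apply/seteqP; split => // a [G FG Ga].
    by apply: Fempty; exists G => //; exists a.
  have Fdom G' : F G' -> G' !=set0 -> dominated_graph G' /\ G0 `<=` G'.
    by move=> /FP[->[]//|].
  right; split.
    apply: dominated_graph_bigcup Ftot _; last by exists G.
    by move=> G' FG' /(Fdom _ FG') [].
  by move=> a /(proj2 (Fdom _ FG Gn0)) Ga; exists G.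
case: PG => [Gempty|[Gdom G0G]].
  exfalso; apply: (Gmax G0); last by right; split.
  by rewrite Gempty; split => // G0empty; case: G0dom => /G0empty.
exists G; split => // G' G'dom GG' a G'a.
apply: contrapT => Gna; apply: (Gmax G'); last by right; split => // b /G0G /GG'.
by split => // /(_ a G'a).
Qed.

Lemma dominated_graph_gap G v : dominated_graph G ->
  exists c, forall a, G a -> a.2 - q (a.1 - v) <= c /\ c <= q (a.1 + v) - a.2.
Proof.
move=> [G0 GD _ Gq].
pose S := [set a.2 - q (a.1 - v) | a in G].
have below_upper a b : G a -> G b -> a.2 - q (a.1 - v) <= q (b.1 + v) - b.2.
  move=> Ga Gb; suff : a.2 + b.2 <= q (a.1 - v) + q (b.1 + v) by lra.
  apply: le_trans (Gq _ (GD _ _ Ga Gb)) _.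
  have -> : a.1 + b.1 = (a.1 - v) + (b.1 + v) by rewrite addrACA addNr addr0.
  exact: qD.
exists (sup S) => a Ga; split.
  apply: ub_le_sup; last by exists a.
  by exists (q (0 + v) - 0) => _ [b Gb <-]; exact: (below_upper b (0, 0)).
apply: ge_sup; first by exists (0 - q (0 - v)), (0, 0).
by move=> _ [b Gb <-]; exact: below_upper.
Qed.

Lemma dominated_graph_extend G v : dominated_graph G ->
  exists G', [/\ dominated_graph G', G `<=` G' & exists r, G' (v, r)].
Proof.
move=> Gdom; have [c Gc] := dominated_graph_gap v Gdom; case: Gdom => G0 GD GZ Gq.
(* [c] is the value given to [v]; dividing by [|t|] reduces domination to the
   two sides of the gap. *)
have step a t : G a -> a.2 + t * c <= q (a.1 + t *: v).
  move=> Ga; have [t0|t0|->] := ltgtP t 0; last by rewrite mul0r scale0r !addr0 Gq.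
  - have s0 : 0 < - t by rewrite oppr_gt0.
    have := (Gc _ (GZ (- t)^-1 _ Ga)).1; rewrite /=.
    have -> : (- t)^-1 *: a.1 - v = (- t)^-1 *: (a.1 + t *: v).
      by rewrite scalerDr scalerA invrN mulNr mulVf ?lt_eqF // scaleN1r.
    rewrite qZ gtr0_norm ?invr_gt0 // -mulrBr => h.
    have := ler_wpM2l (ltW s0) h; rewrite mulrA mulfV ?gt_eqF // mul1r.
    by rewrite mulNr lerBlDr addrC -lerBlDr opprK.
  - have := (Gc _ (GZ t^-1 _ Ga)).2; rewrite /=.
    have -> : t^-1 *: a.1 + v = t^-1 *: (a.1 + t *: v).
      by rewrite scalerDr scalerA mulVf ?scale1r // gt_eqF.
    rewrite qZ gtr0_norm ?invr_gt0 // -mulrBr => h.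
    have := ler_wpM2l (ltW t0) h; rewrite mulrA mulfV ?gt_eqF // mul1r.
    by rewrite lerBrDl.
exists [set b | exists a t, G a /\ b = (a.1 + t *: v, a.2 + t * c)]; split.
- split.
  + by exists (0, 0), 0; rewrite scale0r mul0r !addr0.
  + move=> _ _ [a [t [Ga ->]]] [b [s [Gb ->]]].
    exists (a.1 + b.1, a.2 + b.2), (t + s); split; first exact: GD.
    by congr pair; rewrite /= ?scalerDl ?mulrDl addrACA.
  + move=> k _ [a [t [Ga ->]]].
    exists (k *: a.1, k * a.2), (k * t); split; first exact: GZ.
    by rewrite /= scalerDr scalerA mulrDr mulrA.
  + by move=> _ [a [t [Ga ->]]]; exact: step.
- by move=> a Ga; exists a, 0; rewrite scale0r mul0r !addr0; case: a Ga.
- by exists c, (0, 0), 1; rewrite scale1r mul1r !add0r.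
Qed.

Theorem hahn_banach G0 : dominated_graph G0 ->
  exists f : {linear V -> R^o},
    (forall v, f v <= q v) /\ (forall a, G0 a -> f a.1 = a.2).
Proof.
move=> G0dom; have [G [Gdom G0G Gmax]] := exists_maximal_dominated_graph G0dom.
have Gtotal v : exists r, G (v, r).
  have [G' [G'dom GG' [r G'r]]] := dominated_graph_extend v Gdom.
  by exists r; exact: Gmax G'dom GG' _ G'r.
have [f Gf] := choice Gtotal; have [_ GD GZ Gq] := Gdom.
have fL : linear (f : V -> R^o).
  move=> t u w; apply: dominated_graph_functional Gdom (Gf _) _.
  exact: GD (t *: u, t * f u) (w, f w) (GZ t (u, f u) (Gf u)) (Gf w).
exists (linear_of fL); split => [v|[v r] /G0G Gvr]; first exact: Gq (v, f v) (Gf v).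
exact: dominated_graph_functional Gdom (Gf v) Gvr.
Qed.

Lemma hahn_banach_distance (X : lmodType R) (g : {linear X -> V}) v0 :
  exists f : {linear V -> R^o}, [/\ forall v, f v <= q v,
    forall x, f (g x) = 0 & f v0 = inf [set q (v0 - g x) | x in [set: X]]].
Proof.
set d := inf _.
have d_lb : lbound [set q (v0 - g x) | x in [set: X]] 0.
  by move=> _ [x _ <-]; exact: seminorm_ge0.
have d_ge0 : 0 <= d by apply: lb_le_inf => //; exists (q (v0 - g 0)), 0.
have d_le x : d <= q (v0 - g x) by apply: ge_inf; [exists 0|exists x].
pose G0 := [set b | exists x t, b = (g x + t *: v0, t * d)].
have G0dom : dominated_graph G0.
  split.
  - by exists 0, 0; rewrite linear0 scale0r mul0r addr0.
  - move=> _ _ [x [t ->]] [y [s ->]]; exists (x + y), (t + s).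
    by congr pair; rewrite /= ?linearD ?scalerDl ?mulrDl // addrACA.
  - move=> k _ [x [t ->]]; exists (k *: x), (k * t).
    by rewrite /= linearZ scalerDr scalerA mulrA.
  - move=> _ [x [t ->]] /=.
    have [->|t0] := eqVneq t 0; first by rewrite mul0r seminorm_ge0.
    have -> : g x + t *: v0 = t *: (v0 - g (- t^-1 *: x)).
      by rewrite linearZZ scaleNr opprK scalerDr scalerA mulfV // scale1r addrC.
    rewrite qZ; apply: le_trans (ler_wpM2r d_ge0 (ler_norm t)) _.
    by rewrite ler_wpM2l // d_le.
have [f [fq fG0]] := hahn_banach G0dom.
exists f; split => // [x|].
- have /fG0 /= : G0 (g x + 0 *: v0, 0 * d) by exists x, 0.
  by rewrite scale0r addr0 mul0r.
- have /fG0 /= : G0 (g 0 + 1 *: v0, 1 * d) by exists 0, 1.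
  by rewrite linear0 scale1r add0r mul1r.
Qed.

End HahnBanach.

Lemma inf_eq_sup_attained (R : realType) (I S : set R) : I !=set0 ->
  (forall r e, S r -> I e -> r <= e) -> S (inf I) -> inf I = sup S.
Proof.
move=> In0 SI Sinf; have Sub : ubound S (inf I).
  by move=> r Sr; apply: lb_le_inf => // e; exact: SI.
apply/eqP; rewrite eq_le ge_sup ?andbT //; last by exists (inf I).
by apply: ub_le_sup => //; exists (inf I).
Qed.

Section DualNorm.
Variables (R : realType) (Y : normedModType R).

Lemma continuous_linear_of_bound (l : {linear Y -> R^o}) c :
  (forall y, `|l y| <= c * `|y|) -> continuous l.
Proof.
move=> lc; apply: bounded_linear_continuous; apply/bounded_funP => r.
exists (`|c| * r) => y yr; apply: le_trans (lc y) _.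
by apply: le_trans (ler_wpM2r (normr_ge0 y) (ler_norm c)) _; rewrite ler_wpM2l.
Qed.

Lemma dual_norm_has_sup (l : {linear Y -> R^o}) : continuous l ->
  has_sup [set `|l y| | y in [set y : Y | `|y| <= 1]].
Proof.
move=> /linear_bounded_continuous /linear_boundedP [M [_ lM]].
split; first by exists `|l 0|, 0 => //=; rewrite normr0.
exists (`|M| + 1) => _ [y /= y1 <-].
have /lM /(_ y) ly : M < `|M| + 1 by rewrite (le_lt_trans (ler_norm M)) ?ltrDl.
by apply: le_trans ly _; rewrite ler_piMr // addr_ge0.
Qed.

Lemma ler_dual_norm (l : {linear Y -> R^o}) : continuous l ->
  forall y, `|l y| <= dual_norm l * `|y|.
Proof.
move=> /dual_norm_has_sup [_ lsup] y; have [->|y0] := eqVneq y 0.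
  by rewrite linear0 !normr0 mulr0.
have ny0 : 0 < `|y| by rewrite normr_gt0.
rewrite mulrC -ler_pdivrMl //.
have -> : `|y|^-1 * `|l y| = `|l (`|y|^-1 *: y)|.
  by rewrite linearZ normrZ normrV ?unitfE ?gt_eqF // normr_id.
apply: ub_le_sup => //; exists (`|y|^-1 *: y) => //=.
by rewrite normrZ normrV ?unitfE ?gt_eqF // normr_id mulVf ?gt_eqF.
Qed.

Lemma dual_norm_ge0 (l : Y -> R) : 0 <= dual_norm l.
Proof.
rewrite /dual_norm; set S := [set `|l y| | y in _].
have [lsup|/sup_out->//] := pselect (has_sup S).
apply: le_trans (normr_ge0 (l 0)) _; apply: (ub_le_sup lsup.2).
by exists 0 => //=; rewrite normr0.
Qed.

Lemma dual_norm_affine_le (l : Y -> R) s c K : 0 <= s ->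
  (forall y, `|y| <= 1 -> s * `|l y| + c <= K) -> s * dual_norm l + c <= K.
Proof.
move=> s0 lK; have [s_eq0|sn0] := eqVneq s 0.
  by move: (lK 0); rewrite s_eq0 normr0 !mul0r => /(_ ler01).
have sp : 0 < s by rewrite lt_def sn0.
rewrite -lerBrDr mulrC -ler_pdivlMr //; apply: ge_sup.
  by exists `|l 0|, 0 => //=; rewrite normr0.
by move=> _ [y /= y1 <-]; rewrite ler_pdivlMr // mulrC lerBrDr lK.
Qed.

End DualNorm.

Section NormDuality.
Variables (R : realType) (N D : R -> R -> R).
Hypothesis N_homog : forall t a b, 0 <= t -> 0 <= a -> 0 <= b ->
  N (t * a) (t * b) = t * N a b.
Hypothesis N_mono : forall a b a' b', 0 <= a -> a <= a' -> 0 <= b -> b <= b' ->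
  N a b <= N a' b'.
Hypothesis N_subadd : forall a b a' b', 0 <= a -> 0 <= b -> 0 <= a' -> 0 <= b' ->
  N (a + a') (b + b') <= N a b + N a' b'.
(* [D] is the dual norm of [N]: its unit ball is the polar of that of [N]. *)
Hypothesis D_le1P : forall al be, 0 <= al -> 0 <= be ->
  D al be <= 1 <-> forall a b, 0 <= a -> 0 <= b -> al * a + be * b <= N a b.

Variables (X : lmodType R) (Y Z : normedModType R).
Variables (A : {linear X -> Y}) (B : {linear X -> Z}) (k : R) (y0 : Y).
Hypothesis k_gt0 : 0 < k.

Let q (w : Y * Z) := N `|w.1| `|w.2|.

Let qD u v : q (u + v) <= q u + q v.
Proof.
apply: le_trans (N_subadd _ _ _ _) => //.
by apply: N_mono => //; exact: ler_normD.
Qed.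

Let qZ (t : R) w : q (t *: w) = `|t| * q w.
Proof. by rewrite /q /= !normrZ N_homog. Qed.

Lemma weak_norm_duality (l : {linear Y -> R^o}) (m : {linear Z -> R^o}) x :
  is_dual l -> is_dual m -> D (dual_norm l) (dual_norm m) <= 1 ->
  (forall x, l (A x) + k * m (B x) = 0) ->
  `|l y0| <= N `|y0 - A x| (k * `|B x|).
Proof.
move=> lc mc Dl1 lmAB.
have Dle := (D_le1P (dual_norm_ge0 l) (dual_norm_ge0 m)).1 Dl1.
have -> : l y0 = l (y0 - A x) - k * m (B x).
  by move: (lmAB x); rewrite linearB /=; lra.
apply: le_trans (ler_normB _ _) _; rewrite normrM gtr0_norm //.
apply: le_trans (Dle _ _ (normr_ge0 _) (mulr_ge0 (ltW k_gt0) (normr_ge0 _))).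
rewrite mulrCA; apply: lerD; first exact: ler_dual_norm.
by rewrite ler_wpM2l ?(ltW k_gt0) // ler_dual_norm.
Qed.

Lemma dual_le1_of_dominated (l : {linear Y -> R^o}) (m : {linear Z -> R^o}) :
  (forall y z, `|l y + m z| <= N `|y| `|z|) -> D (dual_norm l) (dual_norm m) <= 1.
Proof.
move=> lmq; apply/D_le1P; rewrite ?dual_norm_ge0 // => a b a0 b0.
rewrite mulrC (mulrC (dual_norm m)).
apply: dual_norm_affine_le => // y y1; rewrite addrC.
apply: dual_norm_affine_le => // z z1; rewrite addrC.
(* Signs are absorbed into the arguments: [a |l y| = l (a sg(l y) y)]. *)
have -> : a * `|l y| + b * `|m z| =
          l ((a * Num.sg (l y)) *: y) + m ((b * Num.sg (m z)) *: z).
  by rewrite !linearZZ !normrEsg !mulrA.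
apply: le_trans (ler_norm _) _; apply: le_trans (lmq _ _) _.
have shrink c e (W : normedModType R) (w : W) : 0 <= c -> `|w| <= 1 ->
    `|(c * Num.sg e) *: w| <= c.
  move=> c0 w1; rewrite normrZ normrM normr_sg ger0_norm //.
  by rewrite -mulrA ler_piMr // mulr_ile1 // lern1 leq_b1.
by apply: N_mono; rewrite ?normr_ge0 ?shrink.
Qed.

Lemma norm_duality_attained : exists (l : {linear Y -> R^o}) (m : {linear Z -> R^o}),
  [/\ is_dual l, is_dual m, D (dual_norm l) (dual_norm m) <= 1,
      forall x, l (A x) + k * m (B x) = 0 &
      l y0 = inf [set N `|y0 - A x| (k * `|B x|) | x in [set: X]]].
Proof.
have gL : linear (fun x => (A x, k *: B x) : Y * Z).
  by move=> t x x'; congr pair; rewrite /= linearP // scalerDr !scalerA mulrC.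
have [f [fq fg fy0]] := hahn_banach_distance qD qZ (linear_of gL) (y0, 0).
have lL : linear (fun y => f (y, 0)).
  move=> t y y'; rewrite -linearP; congr (f _).
  by congr pair; rewrite /= scaler0 addr0.
have mL : linear (fun z => f (0, z)).
  move=> t z z'; rewrite -linearP; congr (f _).
  by congr pair; rewrite /= scaler0 addr0.
pose l := linear_of lL; pose m := linear_of mL.
have fE y z : f (y, z) = l y + m z.
  have -> : (y, z) = (y, 0) + (0, z) by congr pair; rewrite /= ?addr0 ?add0r.
  exact: linearD.
have lmq y z : `|l y + m z| <= N `|y| `|z|.
  by rewrite -fE; exact: (seminorm_dominated_norm qZ fq).
have N_norm0 a : 0 <= a -> N a 0 = a * N 1 0.
  by move=> a0; rewrite -N_homog ?mulr1 ?mulr0.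
have N_0norm b : 0 <= b -> N 0 b = b * N 0 1.
  by move=> b0; rewrite -N_homog ?mulr1 ?mulr0.
have lc : is_dual l.
  apply: (@continuous_linear_of_bound _ _ _ (N 1 0)) => y.
  by have := lmq y 0; rewrite linear0 addr0 normr0 (N_norm0 `|y|) // mulrC.
have mc : is_dual m.
  apply: (@continuous_linear_of_bound _ _ _ (N 0 1)) => z.
  by have := lmq 0 z; rewrite linear0 add0r normr0 (N_0norm `|z|) // mulrC.
exists l, m; split => //.
- exact: dual_le1_of_dominated lmq.
- by move=> x; have := fg x; rewrite (fE (A x) (k *: B x)) linearZZ.
- rewrite [LHS]fy0; congr inf; apply: eq_imagel => x _.
  by rewrite /q /= sub0r normrN normrZ gtr0_norm.
Qed.

Theorem norm_duality :
  inf [set N `|y0 - A x| (k * `|B x|) | x in [set: X]] =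
  sup [set r | exists (l : {linear Y -> R^o}) (m : {linear Z -> R^o}),
    [/\ is_dual l, is_dual m, D (dual_norm l) (dual_norm m) <= 1,
        forall x, l (A x) + k * m (B x) = 0 & r = `|l y0|]].
Proof.
have N_ge0 a b : 0 <= a -> 0 <= b -> 0 <= N a b.
  move=> a0 b0; have := N_homog (lexx 0) (lexx 0) (lexx (0 : R)).
  by rewrite !mul0r => <-; exact: N_mono.
have [l [m [lc mc Dlm lmAB ly0]]] := norm_duality_attained.
apply: inf_eq_sup_attained.
- by exists (N `|y0 - A 0| (k * `|B 0|)), 0.
- move=> _ _ [l' [m' [l'c m'c Dl'm' l'm'AB ->]]] [x _ <-].
  exact: weak_norm_duality l'c m'c Dl'm' l'm'AB.
- exists l, m; split=> //; rewrite ly0 ger0_norm //.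
  apply: lb_le_inf; first by exists (N `|y0 - A 0| (k * `|B 0|)), 0.
  by move=> _ [x _ <-]; rewrite N_ge0 // mulr_ge0 // ltW.
Qed.

End NormDuality.

Definition pnorm2 (R : realType) (p a b : R) := (a `^ p + b `^ p) `^ p^-1.

Section PNorm2.
Variables (R : realType) (p : R).
Hypothesis p_gt0 : 0 < p.

Lemma powRK a : 0 <= a -> (a `^ p) `^ p^-1 = a.
Proof. by move=> a0; rewrite -powRrM mulfV ?gt_eqF // powRr1. Qed.

Lemma pnorm2_homog t a b : 0 <= t -> 0 <= a -> 0 <= b ->
  pnorm2 p (t * a) (t * b) = t * pnorm2 p a b.
Proof.
move=> t0 a0 b0; rewrite /pnorm2 !powRM // -mulrDr.
by rewrite powRM ?powRK ?addr_ge0 ?powR_ge0.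
Qed.

Lemma pnorm2_mono a b a' b' : 0 <= a -> a <= a' -> 0 <= b -> b <= b' ->
  pnorm2 p a b <= pnorm2 p a' b'.
Proof.
move=> a0 aa' b0 bb'; have a'0 := le_trans a0 aa'; have b'0 := le_trans b0 bb'.
apply: ge0_ler_powR; rewrite ?nnegrE ?invr_ge0 ?addr_ge0 ?powR_ge0 ?(ltW p_gt0) //.
by apply: lerD; apply: ge0_ler_powR; rewrite ?nnegrE ?(ltW p_gt0).
Qed.

End PNorm2.

Lemma conjugate_expE (R : realType) (p p' : R) :
  1 < p -> p^-1 + p'^-1 = 1 -> (p - 1) * p' = p.
Proof.
move=> p_gt1 pp'; have -> : p' = (1 - p^-1)^-1.
  by rewrite -pp' addrAC subrr add0r invrK.
by field; rewrite subr_eq0 !gt_eqF // (lt_trans ltr01).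
Qed.

Section ConjugateExponents.
Variables (R : realType) (p p' : R).
Hypotheses (p_gt1 : 1 < p) (p'_gt1 : 1 < p') (pp' : p^-1 + p'^-1 = 1).

Let p_gt0 : 0 < p. Proof. exact: lt_trans ltr01 p_gt1. Qed.
Let p'_gt0 : 0 < p'. Proof. exact: lt_trans ltr01 p'_gt1. Qed.

Let powR_conjugate_split T : 0 <= T -> T = T `^ p^-1 * T `^ p'^-1.
Proof. by move=> T0; rewrite -powRD pp' ?oner_eq0 // powRr1. Qed.

Lemma pnorm2_subadd a b a' b' : 0 <= a -> 0 <= b -> 0 <= a' -> 0 <= b' ->
  pnorm2 p (a + a') (b + b') <= pnorm2 p a b + pnorm2 p a' b'.
Proof.
move=> a0 b0 a'0 b'0; set c := a + a'; set d := b + b'.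
have c0 : 0 <= c by rewrite addr_ge0.
have d0 : 0 <= d by rewrite addr_ge0.
set S := c `^ p + d `^ p; have S0 : 0 <= S by rewrite addr_ge0 ?powR_ge0.
have pair_le u v : 0 <= u -> 0 <= v ->
    u * c `^ (p - 1) + v * d `^ (p - 1) <= pnorm2 p u v * S `^ p'^-1.
  move=> u0 v0; have := hoelder2 u0 v0 (powR_ge0 c (p - 1)) (powR_ge0 d (p - 1))
    p_gt0 p'_gt0 pp'.
  by rewrite -!powRrM (conjugate_expE p_gt1 pp').
have S_split : S = (a * c `^ (p - 1) + b * d `^ (p - 1)) +
                   (a' * c `^ (p - 1) + b' * d `^ (p - 1)).
  by rewrite /S -(mulr_powRB1 c0 p_gt0) -(mulr_powRB1 d0 p_gt0) !mulrDl addrACA.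
have S_le : S <= (pnorm2 p a b + pnorm2 p a' b') * S `^ p'^-1.
  by rewrite {1}S_split mulrDl lerD ?pair_le.
have [S_eq0|Sn0] := eqVneq S 0.
  have -> : pnorm2 p c d = 0 by rewrite /pnorm2 -/S S_eq0 powR0 // invr_eq0 gt_eqF.
  by rewrite addr_ge0 ?powR_ge0.
move: S_le; rewrite {1}(powR_conjugate_split S0) ler_pM2r //.
by rewrite powR_gt0 // lt_def Sn0.
Qed.

Lemma pnorm2_dual_le1P al be : 0 <= al -> 0 <= be ->
  pnorm2 p' al be <= 1 <->
  forall a b, 0 <= a -> 0 <= b -> al * a + be * b <= pnorm2 p a b.
Proof.
move=> al0 be0; split => [D_le1 a b a0 b0|dominated].
  apply: le_trans (hoelder2 al0 be0 a0 b0 p'_gt0 p_gt0 _) _; first by rewrite addrC.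
  by rewrite ler_piMl // powR_ge0.
have p'E : (p' - 1) * p = p' by apply: conjugate_expE p'_gt1 _; rewrite addrC.
(* The extremal pair for Hoelder: [(a, b) = (al^(p'-1), be^(p'-1))]. *)
have := dominated _ _ (powR_ge0 al (p' - 1)) (powR_ge0 be (p' - 1)).
rewrite /pnorm2 -!powRrM p'E !mulr_powRB1 //.
set T := al `^ p' + be `^ p' => T_le; have T0 : 0 <= T by rewrite addr_ge0 ?powR_ge0.
have [->|Tn0] := eqVneq T 0; first by rewrite powR0 // invr_eq0 gt_eqF.
move: T_le; rewrite [X in X <= _](powR_conjugate_split T0) -[X in _ <= X]mulr1.
by rewrite ler_pM2l // powR_gt0 // lt_def Tn0.
Qed.

End ConjugateExponents.

Lemma max_dual_le1P (R : realType) (al be : R) :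
  Num.max al be <= 1 <->
  forall a b, 0 <= a -> 0 <= b -> al * a + be * b <= a + b.
Proof.
rewrite ge_max; split => [/andP[al1 be1] a b a0 b0|le_sum].
  by rewrite lerD // ler_piMl.
have := le_sum 1 0 ler01 (lexx 0); have := le_sum 0 1 (lexx 0) ler01.
by rewrite !mulr1 !mulr0 !addr0 !add0r => -> ->.
Qed.

Theorem theorem3p4 (R : realType) (X Y Z : completeNormedModType R)
  (A : {linear X -> Y}) (B : {linear X -> Z})
  (hA : continuous A) (hB : continuous B) (y0 : Y) (rho : R) (hrho : 0 < rho) :
  inf [set `|y0 - A x| + rho * `|B x| | x in [set: X]] =
  sup [set r | exists (l : {linear Y -> R^o}) (m : {linear Z -> R^o}),
         [/\ is_dual l, is_dual m,
             Num.max (dual_norm l) (dual_norm m) <= 1,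
             (forall x : X, l (A x) + rho * m (B x) = 0) &
             r = `|l y0| ]]
  /\
  (forall p p' : R, 1 < p -> 1 < p' -> p^-1 + p'^-1 = 1 ->
   inf [set (`|y0 - A x| `^ p + rho * `|B x| `^ p) `^ p^-1 | x in [set: X]] =
   sup [set r | exists (l : {linear Y -> R^o}) (m : {linear Z -> R^o}),
         [/\ is_dual l, is_dual m,
             (dual_norm l `^ p' + dual_norm m `^ p') `^ p'^-1 <= 1,
             (forall x : X, l (A x) + rho `^ p^-1 * m (B x) = 0) &
             r = `|l y0| ]]).
Proof.
split.
  apply: (@norm_duality R (fun a b => a + b) Num.max) => //.
  - by move=> t a b *; rewrite mulrDr.
  - by move=> *; exact: lerD.
  - by move=> *; rewrite addrACA.
  - by move=> al be _ _; exact: max_dual_le1P.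
move=> p p' p_gt1 p'_gt1 pp'; have p_gt0 : 0 < p := lt_trans ltr01 p_gt1.
have costE x : (`|y0 - A x| `^ p + rho * `|B x| `^ p) `^ p^-1 =
               pnorm2 p `|y0 - A x| (rho `^ p^-1 * `|B x|).
  by rewrite /pnorm2 powRM ?powR_ge0 // powRAC powRK // ltW.
rewrite (eq_imagel (fun x _ => costE x)).
apply: (@norm_duality R (pnorm2 p) (pnorm2 p')); rewrite ?powR_gt0 //.
- exact: pnorm2_homog.
- exact: pnorm2_mono.
- exact: pnorm2_subadd p_gt1 p'_gt1 pp'.
- exact: pnorm2_dual_le1P p_gt1 p'_gt1 pp'.
Qed.
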